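(* Fourier matrices $F$ and $G$ of the same size, with indexing groups $I_F$ and $I_G$, are permutation equivalent, i.e. $P_{\chi'}\,F\,P_{\chi''}^T=G$ for some bijections $\chi',\chi'':I_G\to I_F$, if and only if the groups $I_F$ and $I_G$ are isomorphic.
   Context: For $n\ge1$, $F_n$ is the $n\times n$ matrix with rows and columns indexed by $\mathbb Z_n$ and entries $e^{2\pi i\,\tilde i\tilde j/n}$. A Fourier matrix is $F=F_{N_1}\otimes\cdots\otimes F_{N_r}$ of size $N=N_1\cdots N_r$, indexed by $I_F=\mathbb Z_{N_1}\times\cdots\times\mathbb Z_{N_r}$ with $F_{i,j}=\prod_x(F_{N_x})_{i_x,j_x}$; group indices correspond to ordinary indices via lexicographic order of $I_F$. For a bijection $\varphi:I_G\to I_F$, $P_\varphi$ is the $N\times N$ permutation matrix (rows indexed by $I_G$, columns by $I_F$) with $(P_\varphi)_{i,\varphi(i)}=1$. *)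

From HB Require Import structures.
From mathcomp Require Import all_boot all_order all_algebra.
From mathcomp Require Import complex.
From mathcomp Require Import reals trigo.
Set Implicit Arguments. Unset Strict Implicit. Unset Printing Implicit Defensive.
Import Order.TTheory GRing.Theory Num.Theory.
Local Open Scope ring_scope.

(* The indexing group I_F = Z_{N_1} x ... x Z_{N_r} of the Fourier matrix
   F_{N_1} (x) ... (x) F_{N_r}, where Ns = [:: N_1; ...; N_r]. *)
Definition idx (Ns : seq nat) : finType :=
  {dffun forall x : 'I_(size Ns), 'I_(nth 1%N Ns x)}.

Lemma ord_gt0 (n : nat) (a : 'I_n) : (0 < n)%N.
Proof. by apply: leq_ltn_trans (leq0n a) (ltn_ord a). Qed.

Definition addZn (n : nat) (a b : 'I_n) : 'I_n :=
  Ordinal (ltn_pmod (a + b)%N (ord_gt0 a)).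

Definition idx_add (Ns : seq nat) (a b : idx Ns) : idx Ns :=
  finfun (fun x => addZn (a x) (b x)).

Definition group_iso (Ms Ns : seq nat) (phi : idx Ms -> idx Ns) : Prop :=
  bijective phi /\ forall a b, phi (idx_add a b) = idx_add (phi a) (phi b).

Definition groups_isomorphic (Ms Ns : seq nat) : Prop :=
  exists phi : idx Ms -> idx Ns, group_iso phi.

Definition e2pii (R : realType) (t : R) : R[i] :=
  Complex (cos (2 * pi * t)) (sin (2 * pi * t)).

(* Matrices with rows/columns indexed by finite types (the identification
   with ordinary N x N matrices via lexicographic order is immaterial for
   the statement, which quantifies over all bijections). *)
Definition fmat (R : Type) (I J : finType) := I -> J -> R.

Definition fmul (R : ringType) (I J K : finType)
    (A : fmat R I J) (B : fmat R J K) : fmat R I K :=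
  fun i k => \sum_(j : J) A i j * B j k.

Definition ftr (R : Type) (I J : finType) (A : fmat R I J) : fmat R J I :=
  fun j i => A i j.

Definition fourier (R : realType) (Ns : seq nat) : fmat R[i] (idx Ns) (idx Ns) :=
  fun i j => \prod_(x : 'I_(size Ns))
     e2pii (((i x : nat) * (j x : nat))%:R / (nth 1%N Ns x)%:R : R).

Definition permmat (R : ringType) (I J : finType) (phi : I -> J) : fmat R I J :=
  fun i j => (phi i == j)%:R.

Arguments fourier R Ns : clear implicits.
Arguments permmat R {I J} phi.

(* The entries of a Fourier matrix F are characters in each index separately,
   its rows are pairwise distinct, and every nowhere-vanishing character of
   I_F is a row of F: it sends the unit vector of each factor Z_N to an N-th
   root of unity, i.e. to some e^{2 pi i c / N}.
   If P_chi1 F P_chi2^T = G, then F(chi1 (i + i'), chi2 k) and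
   F(chi1 i + chi1 i', chi2 k) both equal G(i, k) G(i', k); as chi2 is onto
   and rows of F are distinct, chi1 is an isomorphism I_G -> I_F.
   Conversely, for an isomorphism phi : I_G -> I_F every row of G composed
   with phi^-1 is a character of I_F, hence a row chi(i) of F; distinct rows
   of G give distinct chi(i), so chi is a bijection and P_chi F P_phi^T = G. *)

From HB Require Import structures.
From mathcomp Require Import all_boot all_order all_algebra.
From mathcomp Require Import complex.
From mathcomp Require Import reals trigo.
From mathcomp Require Import lra.
Set Implicit Arguments. Unset Strict Implicit. Unset Printing Implicit Defensive.
Import Order.TTheory GRing.Theory Num.Theory.
Local Open Scope ring_scope.

Section E2pii.
Variable R : realType.
Implicit Types (s t : R) (n N c : nat).

Lemma e2piiD s t : e2pii (s + t) = e2pii s * e2pii t.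
Proof.
rewrite /e2pii mulrDr sinD cosD /GRing.mul /=.
by congr Complex; rewrite addrC.
Qed.

Lemma e2pii0 : e2pii (0 : R) = 1.
Proof. by rewrite /e2pii mulr0 cos0 sin0. Qed.

Lemma e2pii_neq0 t : e2pii t != 0.
Proof.
apply/eqP => t0; have := e2piiD t (- t).
by rewrite subrr e2pii0 t0 mul0r => /eqP; rewrite oner_eq0.
Qed.

Lemma e2pii_nat n : e2pii (n%:R : R) = 1.
Proof.
elim: n => [|n IHn]; first exact: e2pii0.
rewrite -addn1 natrD e2piiD IHn mul1r /e2pii mulr1 mulr_natl.
by rewrite cos2pi sin2pi.
Qed.

Lemma e2piiMn t n : e2pii t ^+ n = e2pii (n%:R * t).
Proof.
elim: n => [|n IHn]; first by rewrite mul0r e2pii0.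
by rewrite exprSr IHn -e2piiD -addn1 natrD mulrDl mul1r.
Qed.

Lemma e2pii_modn N c : (0 < N)%N ->
  e2pii ((c %% N)%:R / N%:R : R) = e2pii (c%:R / N%:R).
Proof.
move=> N_gt0; have N_neq0 : N%:R != 0 :> R by rewrite pnatr_eq0 -lt0n.
rewrite {2}(divn_eq c N) natrD natrM mulrDl mulfK // e2piiD e2pii_nat.
by rewrite mul1r.
Qed.

Lemma e2pii_eq1 t : 0 <= t < 1 -> e2pii t = 1 -> t = 0.
Proof.
(* cos (2 pi t) = 1 forces sin (pi t) = 0, impossible for 0 < pi t < pi. *)
move=> /andP[t_ge0 t_lt1] [cos2t1 _].
have /cos1sin0 sin_t0 : `|cos (pi * t)| = 1.
  have : cos (pi * t) ^+ 2 = 1.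
    move: cos2t1; rewrite -mulrA mulr_natl cos_mulr2n; lra.
  by move/eqP; rewrite sqrf_eq1 => /orP[]/eqP->; rewrite ?normrN normr1.
apply/eqP; rewrite eq_le t_ge0 andbT leNgt; apply/negP => t_gt0.
suff : 0 < sin (pi * t) by rewrite sin_t0 ltxx.
apply: sin_gt0_pi; rewrite mulr_gt0 ?pi_gt0 //=.
by rewrite -[ltRHS]mulr1 ltr_pM2l ?pi_gt0.
Qed.

Lemma e2pii_frac_inj N c c' : (c < N)%N -> (c' < N)%N ->
  e2pii (c%:R / N%:R : R) = e2pii (c'%:R / N%:R) -> c = c'.
Proof.
wlog le_c'c : c c' / (c' <= c)%N => [wlog_le|] cN c'N eq_cc'.
  case/orP: (leq_total c' c) => le; first exact: wlog_le.
  by symmetry; apply: wlog_le.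
have N_gt0 : (0 < N%:R :> R) by rewrite ltr0n (leq_ltn_trans _ cN).
have frac_bounds k : (k < N)%N -> 0 <= (k%:R / N%:R : R) < 1.
  by move=> kN; rewrite divr_ge0 ?ler0n //= ltr_pdivrMr // mul1r ltr_nat.
have diff0 : (c - c')%:R / N%:R = 0 :> R.
  apply: e2pii_eq1.
    have : c'%:R / N%:R <= c%:R / N%:R :> R by rewrite ler_pM2r ?invr_gt0 ?ler_nat.
    rewrite natrB // mulrBl.
    move: (frac_bounds _ cN) (frac_bounds _ c'N) => /andP[? ?] /andP[? ?] ?.
    by apply/andP; split; lra.
  by rewrite natrB // mulrBl e2piiD eq_cc' -e2piiD subrr e2pii0.
move/eqP: diff0; rewrite mulf_eq0 invr_eq0 pnatr_eq0 subn_eq0 (gt_eqF N_gt0) orbF.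
by move=> le_cc'; apply/eqP; rewrite eqn_leq le_cc'.
Qed.

Lemma unity_root_e2pii N (z : R[i]) : (0 < N)%N -> z ^+ N = 1 ->
  exists c : 'I_N, z = e2pii (c%:R / N%:R).
Proof.
move=> N_gt0 zN1.
have [c /eqP->|z_new] := pickP (fun c : 'I_N => z == e2pii (c%:R / N%:R)).
  by exists c.
(* Otherwise z and the N distinct e2pii (c / N) are N + 1 roots of 'X^N - 1. *)
pose roots := z :: [seq e2pii ((c : nat)%:R / N%:R : R) | c : 'I_N].
have e2pii_root (c : 'I_N) : e2pii (c%:R / N%:R : R) ^+ N = 1.
  by rewrite e2piiMn mulrC divfK ?e2pii_nat // pnatr_eq0 -lt0n.
have : (size roots < size (('X^N - 1)%R : {poly R[i]}))%N.
  apply: max_poly_roots; first by rewrite -size_poly_eq0 size_XnsubC.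
    apply/allP => w; rewrite inE /root !hornerE subr_eq0.
    by case/orP=> [/eqP->|/mapP[c _ ->]]; rewrite ?zN1 ?e2pii_root.
  rewrite /= map_inj_uniq ?enum_uniq ?andbT.
    by apply/mapP => -[c _ /eqP]; rewrite z_new.
  by move=> c c' /e2pii_frac_inj eq_cc'; apply/val_inj/eq_cc'.
by rewrite size_XnsubC //= size_map -cardE card_ord ltnn.
Qed.

End E2pii.

Section FourierCharacters.
Variables (R : realType) (Ns : seq nat).
Hypothesis Ns_gt0 : forall x, (0 < nth 1%N Ns x)%N.
Local Notation N x := (nth 1%N Ns x).
Implicit Types (a b : idx Ns) (x : 'I_(size Ns)) (m : nat).

Definition idx0 : idx Ns := finfun (fun y : 'I_(size Ns) => Ordinal (Ns_gt0 y)).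

Definition idx_single x m : idx Ns :=
  finfun (fun y : 'I_(size Ns) => Ordinal (ltn_pmod ((y == x) * m)%N (Ns_gt0 y))).

Definition idx_dec b x : idx Ns :=
  finfun (fun y : 'I_(size Ns) =>
    Ordinal (leq_ltn_trans (leq_subr (y == x) (b y)) (ltn_ord (b y)))).

Lemma idx_addE a b y : (idx_add a b y : nat) = ((a y + b y) %% N y)%N.
Proof. by rewrite ffunE. Qed.

Lemma idx_addr0 a : idx_add a idx0 = a.
Proof.
by apply/ffunP => y; apply/val_inj => /=; rewrite idx_addE ffunE addn0 modn_small.
Qed.

Lemma idx_single_add x m m' :
  idx_add (idx_single x m) (idx_single x m') = idx_single x (m + m').
Proof.
by apply/ffunP => y; apply/val_inj => /=; rewrite idx_addE !ffunE /= modnDm mulnDr.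
Qed.

Lemma idx_single0 x : idx_single x 0 = idx0.
Proof. by apply/ffunP => y; apply/val_inj; rewrite !ffunE /= muln0 mod0n. Qed.

Lemma idx_singleN x : idx_single x (N x) = idx0.
Proof.
apply/ffunP => y; apply/val_inj; rewrite !ffunE /=.
by case: eqP => [->|_]; rewrite ?mul1n ?modnn ?mul0n ?mod0n.
Qed.

Lemma idx_decE b x y : (0 < b x)%N -> (b y : nat) = (idx_dec b x y + (y == x))%N.
Proof. by move=> bx_gt0; rewrite ffunE subnK //; case: eqP => [->|]. Qed.

Lemma idx_dec_add b x : (0 < b x)%N -> idx_add (idx_dec b x) (idx_single x 1) = b.
Proof.
move=> bx_gt0; apply/ffunP => y; apply/val_inj => /=.
by rewrite idx_addE [idx_single _ _ _]ffunE /= modnDmr muln1 -idx_decE // modn_small.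
Qed.

Definition is_char (chi : idx Ns -> R[i]) := {morph chi : a b / idx_add a b >-> a * b}.

Section Character.
Variable chi : idx Ns -> R[i].
Hypotheses (chiM : is_char chi) (chi_neq0 : forall b, chi b != 0).

Lemma char_idx0 : chi idx0 = 1.
Proof. by apply: (mulfI (chi_neq0 idx0)); rewrite mulr1 -chiM idx_addr0. Qed.

Lemma char_single x m : chi (idx_single x m) = chi (idx_single x 1) ^+ m.
Proof.
elim: m => [|m IHm]; first by rewrite idx_single0 char_idx0.
by rewrite exprSr -addn1 -idx_single_add chiM IHm.
Qed.

Lemma char_root x : chi (idx_single x 1) ^+ N x = 1.
Proof. by rewrite -char_single idx_singleN char_idx0. Qed.

Lemma char_prod b : chi b = \prod_x chi (idx_single x 1) ^+ b x.
Proof.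
(* Induction on the weight \sum_y b y, splitting off one unit vector. *)
have [n] := ubnP (\sum_y (b y : nat))%N; elim: n b => // n IHn b.
rewrite ltnS => weight_b.
have [x bx_gt0|b0] := pickP (fun y => 0 < b y)%N; last first.
  have -> : b = idx0.
    apply/ffunP => y; apply/val_inj; rewrite ffunE.
    by apply/eqP; rewrite -leqn0 leqNgt b0.
  by rewrite char_idx0 big1 // => y _; rewrite ffunE expr0.
have idx_dec_weight : (\sum_y (idx_dec b x y : nat) < n)%N.
  apply: leq_trans weight_b; rewrite (eq_bigr _ (fun y _ => idx_decE y bx_gt0)).
  by rewrite big_split /= -[X in (X < _)%N]addn0 ltn_add2l (bigD1 x) //= eqxx.
rewrite -{1}(idx_dec_add bx_gt0) chiM IHn // (bigD1 x) //= [RHS](bigD1 x) //=.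
rewrite (idx_decE x bx_gt0) eqxx exprD expr1 mulrAC; congr (_ * _).
by apply: eq_bigr => y /negbTE yx; rewrite (idx_decE y bx_gt0) yx addn0.
Qed.

Lemma char_fourier_row : exists c, chi =1 fourier R Ns c.
Proof.
have [c chi_single] : exists c : idx Ns,
    forall x, chi (idx_single x 1) = e2pii ((c x)%:R / (N x)%:R).
  have /fin_all_exists[c Hc] x := unity_root_e2pii (Ns_gt0 x) (char_root x).
  by exists (finfun c) => x; rewrite ffunE.
exists c => b; rewrite char_prod; apply: eq_bigr => x _.
by rewrite chi_single e2piiMn mulrA -natrM mulnC.
Qed.

End Character.

Lemma fourierC a b : fourier R Ns a b = fourier R Ns b a.
Proof. by apply: eq_bigr => x _; rewrite mulnC. Qed.

Lemma fourier_neq0 a b : fourier R Ns a b != 0.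
Proof. by rewrite prodf_seq_neq0; apply/allP => x _; apply: e2pii_neq0. Qed.

Lemma fourierDl b : is_char (fourier R Ns ^~ b).
Proof.
move=> a a'; rewrite -big_split; apply: eq_bigr => x _ /=.
by rewrite idx_addE -e2pii_modn // modnMml e2pii_modn // mulnDl natrD mulrDl e2piiD.
Qed.

Lemma fourierDr a : is_char (fourier R Ns a).
Proof. by move=> b b'; rewrite !(fourierC a) fourierDl. Qed.

Lemma fourier_single a x m :
  fourier R Ns a (idx_single x m) = e2pii ((a x * m)%:R / (N x)%:R).
Proof.
rewrite /fourier (bigD1 x) //= big1 => [|y /negbTE yx]; last first.
  by rewrite ffunE /= yx mul0n mod0n muln0 mul0r e2pii0.
by rewrite mulr1 ffunE eqxx mul1n -e2pii_modn // modnMmr e2pii_modn.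
Qed.

Lemma fourier_row_inj a a' : fourier R Ns a =1 fourier R Ns a' -> a = a'.
Proof.
move=> eq_aa'; apply/ffunP => x; apply/val_inj.
move: (eq_aa' (idx_single x 1)); rewrite !fourier_single !muln1.
by move/e2pii_frac_inj; apply.
Qed.

End FourierCharacters.

Lemma all_gt0_nth (Ns : seq nat) :
  all (fun n => 0 < n)%N Ns -> forall k, (0 < nth 1%N Ns k)%N.
Proof.
move=> /all_nthP Ns_gt0 k.
by have [/Ns_gt0|/(nth_default 1%N)->] := ltnP k (size Ns).
Qed.

Lemma sumr_pred1 (V : nmodType) (J : finType) (a : J) (F : J -> V) :
  \sum_j F j *+ (a == j) = F a.
Proof.
under eq_bigr do rewrite mulrb.
by rewrite -big_mkcond (big_pred1 a) // => j; rewrite eq_sym.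
Qed.

Lemma permmat_conjE (R : nzRingType) (I J : finType) (chi1 chi2 : I -> J)
    (A : fmat R J J) i k :
  fmul (fmul (permmat R chi1) A) (ftr (permmat R chi2)) i k = A (chi1 i) (chi2 k).
Proof.
rewrite /fmul /ftr /permmat; under eq_bigr do rewrite mulr_natr.
by under eq_bigr do under eq_bigr do rewrite mulr_natl; rewrite !sumr_pred1.
Qed.

Section PermutationEquivalence.
Variables (R : realType) (Ns Ms : seq nat).
Hypotheses (Ns_gt0 : forall x, (0 < nth 1%N Ns x)%N)
           (Ms_gt0 : forall x, (0 < nth 1%N Ms x)%N).

Lemma fourier_perm_morph (chi1 chi2 : idx Ms -> idx Ns) : bijective chi2 ->
    (forall i k, fourier R Ns (chi1 i) (chi2 k) = fourier R Ms i k) ->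
  {morph chi1 : a b / idx_add a b}.
Proof.
move=> [chi2' _ chi2K] F_eq a a'; apply: (fourier_row_inj (R := R) Ns_gt0) => b.
by rewrite -(chi2K b) (fourierDl R Ns_gt0) !F_eq (fourierDl R Ms_gt0).
Qed.

Lemma fourier_perm_of_iso (phi : idx Ms -> idx Ns) : group_iso phi ->
  exists chi : idx Ms -> idx Ns, bijective chi /\
    forall i k, fourier R Ns (chi i) (phi k) = fourier R Ms i k.
Proof.
move=> [[psi phiK psiK] phiM].
have psiM : {morph psi : a b / idx_add a b}.
  by move=> a b; apply: (can_inj phiK); rewrite phiM !psiK.
have row_char i : exists c, forall b, fourier R Ms i (psi b) = fourier R Ns c b.
  apply: char_fourier_row => // [b b'|b]; last exact: fourier_neq0.
  by rewrite /= psiM (fourierDr R Ms_gt0).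
have [chi chiE] := fin_all_exists row_char.
have chi_inj : injective chi.
  move=> i i' eq_ii'; apply: (fourier_row_inj (R := R) Ms_gt0) => k.
  by rewrite -(phiK k) !chiE eq_ii'.
exists chi; split; last by move=> i k; rewrite -chiE /= phiK.
by apply: inj_card_bij; rewrite // (bij_eq_card (Bijective phiK psiK)).
Qed.

End PermutationEquivalence.

Theorem corollary4p5 (R : realType) (Ns Ms : seq nat)
  (HNs : all (fun n => 0 < n)%N Ns) (HMs : all (fun n => 0 < n)%N Ms)
  (Hsize : (\prod_(n <- Ns) n)%N = (\prod_(n <- Ms) n)%N) :
  (exists chi1 chi2 : idx Ms -> idx Ns,
      bijective chi1 /\ bijective chi2 /\
      fmul (fmul (permmat R[i] chi1) (fourier R Ns)) (ftr (permmat R[i] chi2))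
      = fourier R Ms)
  <-> groups_isomorphic Ms Ns.
Proof.
have Ns_gt0 := all_gt0_nth HNs; have Ms_gt0 := all_gt0_nth HMs.
split=> [[chi1 [chi2 [chi1_bij [chi2_bij conj_eq]]]]|[phi iso_phi]].
  have F_eq i k : fourier R Ns (chi1 i) (chi2 k) = fourier R Ms i k.
    by rewrite -conj_eq permmat_conjE.
  by exists chi1; split; last exact: fourier_perm_morph F_eq.
have [chi [chi_bij F_eq]] := fourier_perm_of_iso R Ns_gt0 Ms_gt0 iso_phi.
exists chi, phi; do 2!split=> //; first exact: iso_phi.1.
apply: boolp.funext => i; apply: boolp.funext => k.
by rewrite permmat_conjE.
Qed.
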